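(* Let $q$ be a prime power. (i) If $C$ is an $[n,k,d]$ linear code over $\mathbb{F}_q$ whose Euclidean hull $C\cap C^{\perp_E}$ has dimension $l$, then there exists a set $T$ of $l$ coordinate positions such that the shortened code $C_T$ of $C$ on $T$ is a Euclidean LCD $[n-l,k-l,d']$ code with $d'\ge d$. (ii) If $C$ is an $[n,k,d]$ linear code over $\mathbb{F}_{q^2}$ whose Hermitian hull $C\cap C^{\perp_H}$ has dimension $l$, then there exists a set $T$ of $l$ coordinate positions such that the shortened code $C_T$ of $C$ on $T$ is a Hermitian LCD $[n-l,k-l,d']$ code with $d'\ge d$.
   Context: An $[n,k,d]$ linear code over a finite field $F$ is a $k$-dimensional subspace of $F^n$ with minimum nonzero Hamming weight $d$. Euclidean inner product on $\mathbb{F}_q^n$: $\langle x,y\rangle_E=\sum x_iy_i$; Hermitian inner product on $\mathbb{F}_{q^2}^n$: $\langle x,y\rangle_H=\sum x_iy_i^q$; $C^{\perp_E}$, $C^{\perp_H}$ are the corresponding dual codes. The (Euclidean/Hermitian) hull of $C$ is $C\cap C^{\perp}$; $C$ is (Euclidean/Hermitian) LCD if its hull is $\{0\}$. For a set $T$ of $t$ coordinate positions, let $C(T)$ be the subcode of codewords that are $0$ on all positions of $T$; the shortened code $C_T$ is obtained from $C(T)$ by deleting the coordinates in $T$, and has length $n-t$. *)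

From HB Require Import structures.
From mathcomp Require Import all_boot all_order all_algebra.
Set Implicit Arguments. Unset Strict Implicit. Unset Printing Implicit Defensive.
Import GRing.Theory.
Local Open Scope ring_scope.

Section Codes.
Variable F : finFieldType.

Definition wt (n : nat) (x : 'rV[F]_n) : nat := #|[set i | x ord0 i != 0]|.

Definition min_dist_ge (n : nat) (C : {vspace 'rV[F]_n}) (d : nat) : Prop :=
  forall x, x \in C -> x != 0 -> (d <= wt x)%N.

Definition is_min_dist (n : nat) (C : {vspace 'rV[F]_n}) (d : nat) : Prop :=
  (exists2 x, (x \in C) && (x != 0) & wt x = d) /\ min_dist_ge C d.

Definition ipE (n : nat) (x y : 'rV[F]_n) : F := \sum_(i < n) x ord0 i * y ord0 i.
Definition ipH (q n : nat) (x y : 'rV[F]_n) : F :=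
  \sum_(i < n) x ord0 i * (y ord0 i) ^+ q.

Definition dualE (n : nat) (C : {vspace 'rV[F]_n}) : {vspace 'rV[F]_n} :=
  <<enum [set y : 'rV[F]_n | [forall x : 'rV[F]_n, (x \in C) ==> (ipE x y == 0%R)]]>>%VS.
Definition dualH (q n : nat) (C : {vspace 'rV[F]_n}) : {vspace 'rV[F]_n} :=
  <<enum [set y : 'rV[F]_n | [forall x : 'rV[F]_n, (x \in C) ==> (ipH q x y == 0%R)]]>>%VS.

Definition hullE (n : nat) (C : {vspace 'rV[F]_n}) := (C :&: dualE C)%VS.
Definition hullH (q n : nat) (C : {vspace 'rV[F]_n}) := (C :&: dualH q C)%VS.

Definition LCD_E (n : nat) (C : {vspace 'rV[F]_n}) : Prop := hullE C = 0%VS.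
Definition LCD_H (q n : nat) (C : {vspace 'rV[F]_n}) : Prop := hullH q C = 0%VS.

(* deleting the coordinates in T: keep the coordinates of ~: T, in increasing order *)
Definition delete (n : nat) (T : {set 'I_n}) (x : 'rV[F]_n) : 'rV[F]_#|~: T| :=
  \row_(j < #|~: T|) x ord0 (@enum_val _ (pred_of_set (~: T)) j).

Definition shortened (n : nat) (C : {vspace 'rV[F]_n}) (T : {set 'I_n})
  : {vspace 'rV[F]_#|~: T|} :=
  <<[seq delete T x | x <- enum [set x : 'rV[F]_n |
        (x \in C) && [forall i in T, x ord0 i == 0%R]]]>>%VS.

End Codes.

From HB Require Import structures.
From mathcomp Require Import all_boot all_order all_algebra all_field.
Set Implicit Arguments. Unset Strict Implicit. Unset Printing Implicit Defensive.
Import GRing.Theory.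
Local Open Scope ring_scope.

(* Write H for the hull of C with respect to the form sum_i x_i s(y_i), where s is
   an involutive field automorphism (the identity, or a |-> a^q when |F| = q^2).
   Choose an information set T of H: a minimal set of positions on which no
   nonzero vector of H vanishes. Minimality makes restriction to T map H onto
   F^T, so |T| = dim H, and then C also restricts onto F^T; hence the subcode
   C(T) has dimension k - l, and deleting T is injective and weight-preserving
   on it. If z in C(T) is orthogonal to C(T), then for x in C pick h in H that
   agrees with x on T: x - h lies in C(T) and h is orthogonal to z, so x is
   orthogonal to z. Thus z lies in H and vanishes on T, so z = 0. *)

Section SpanOfSet.
Variables (F : finFieldType) (n : nat).

Lemma mem_span_enum_set (P : pred 'rV[F]_n) :
  P 0 -> (forall a u v, P u -> P v -> P (a *: u + v)) ->
  forall v, (v \in <<enum [set x | P x]>>%VS) = P v.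
Proof.
move=> P0 PC v; apply/idP/idP => [vX | Pv]; last first.
  by apply: memv_span; rewrite mem_enum inE.
rewrite (coord_span (X := in_tuple _) vX); apply: (big_ind P) => //.
  by move=> u w Pu Pw; rewrite -[u]scale1r; apply: PC.
move=> i _; rewrite -[_ *: _]addr0; apply: PC => //.
by have := mem_nth 0 (ltn_ord i); rewrite mem_enum inE.
Qed.

Lemma span_enum_vspace (V : {vspace 'rV[F]_n}) : <<enum [set x | x \in V]>>%VS = V.
Proof.
apply/vspaceP => v; apply: mem_span_enum_set => [|a u w uV wV]; first exact: mem0v.
by rewrite memvD ?memvZ.
Qed.

End SpanOfSet.

Section Puncture.
Variables (F : finFieldType) (n : nat).
Implicit Types (T : {set 'I_n}) (x : 'rV[F]_n) (C H : {vspace 'rV[F]_n}).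

Fact delete_is_linear T : linear (@delete F n T).
Proof. by move=> a x y; apply/rowP => j; rewrite !mxE. Qed.

HB.instance Definition _ T :=
  GRing.isLinear.Build F 'rV_n 'rV_#|~: T| _ (@delete F n T) (delete_is_linear T).

Definition puncture T : 'Hom('rV[F]_n, 'rV[F]_#|~: T|) := linfun (delete T).

Lemma punctureE T x : puncture T x = delete T x.
Proof. exact: lfunE. Qed.

Lemma delete_eq0 T x : (delete T x == 0) = [forall i in ~: T, x ord0 i == 0].
Proof.
apply/eqP/forall_inP => [/rowP x0 i iTc | x0]; last first.
  by apply/rowP => j; rewrite !mxE; apply/eqP/x0/enum_valP.
by have := x0 (enum_rank_in iTc i); rewrite !mxE enum_rankK_in // => ->.
Qed.

Lemma puncture_setC_eq0 T x :
  (puncture (~: T) x == 0) = [forall i in T, x ord0 i == 0].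
Proof. by rewrite punctureE delete_eq0 setCK. Qed.

Lemma delete_setC_eq0 T x : delete (~: T) x = 0 -> delete T x = 0 -> x = 0.
Proof.
move=> /eqP; rewrite delete_eq0 setCK => /forall_inP xT.
move=> /eqP; rewrite delete_eq0 => /forall_inP xTc.
apply/rowP => i; rewrite mxE; apply/eqP.
by case: (boolP (i \in T)) => [/xT | iT] //; apply: xTc; rewrite inE.
Qed.

Lemma delete_setC_delta T (j : 'I_#|~: ~: T|) x :
  [forall k in T :\ enum_val j, x ord0 k == 0] ->
  delete (~: T) x = x ord0 (enum_val j) *: delta_mx 0 j.
Proof.
move=> /forall_inP x0; apply/rowP => k; rewrite !mxE /=.
have [-> | kj] := eqVneq k j; first by rewrite mulr1.
rewrite mulr0; apply/eqP/x0.
have kT : enum_val k \in T by have := enum_valP k; rewrite !inE negbK.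
rewrite !inE kT andbT.
by apply: contra kj => /eqP/enum_val_inj ->.
Qed.

Lemma shortenedE C T :
  shortened C T = (puncture T @: (C :&: lker (puncture (~: T))))%VS.
Proof.
rewrite /shortened.
have -> : [set x | (x \in C) && [forall i in T, x ord0 i == 0]] =
           [set x | x \in C :&: lker (puncture (~: T))]%VS.
  by apply/setP => x; rewrite !inE memv_cap memv_ker puncture_setC_eq0.
by rewrite -(eq_map (@punctureE T)) -limg_span span_enum_vspace.
Qed.

Lemma dim_shortened C T :
  \dim (shortened C T) = (\dim C - \dim (puncture (~: T) @: C))%N.
Proof.
have K0 : (C :&: lker (puncture (~: T)) :&: lker (puncture T) = 0)%VS.
  apply/eqP; rewrite -subv0; apply/subvP => x.
  rewrite !memv_cap !memv_ker memv0 !punctureE => /andP [/andP [_ /eqP xT] /eqP xTc].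
  by rewrite (delete_setC_eq0 xT xTc).
by rewrite shortenedE (limg_dim_eq K0) -(limg_ker_dim (puncture (~: T)) C) addnK.
Qed.

Lemma wt_delete T x : delete (~: T) x = 0 -> wt (delete T x) = wt x.
Proof.
move=> /eqP; rewrite delete_eq0 setCK => /forall_inP xT.
rewrite /wt -(card_imset _ enum_val_inj); apply: eq_card => i; rewrite inE.
apply/imsetP/idP => [[j] | xi0]; first by rewrite inE mxE => ? ->.
have iTc : i \in ~: T by rewrite inE; apply: contraNN xi0 => /xT.
by exists (enum_rank_in iTc i); rewrite ?inE ?mxE enum_rankK_in.
Qed.

Lemma min_dist_ge_shortened C T d :
  min_dist_ge C d -> min_dist_ge (shortened C T) d.
Proof.
move=> Cd y; rewrite shortenedE => /memv_imgP [x].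
rewrite memv_cap memv_ker !punctureE => /andP [xC /eqP xT] -> y0.
by rewrite wt_delete // Cd //; apply: contraNneq y0 => ->; rewrite linear0.
Qed.

Lemma exists_information_set H :
  exists T, (H :&: lker (puncture (~: T)) = 0)%VS /\ (puncture (~: T) @: H = fullv)%VS.
Proof.
pose inj T := (H :&: lker (puncture (~: T)) == 0)%VS.
have [T /minsetP [/eqP injT minT] _] : {T | minset inj T & T \subset setT}.
  apply: minset_exists; rewrite /inj -subv0; apply/subvP => x.
  rewrite memv_cap memv_ker puncture_setC_eq0 memv0 => /andP [_ /forall_inP x0].
  by apply/eqP/rowP => i; rewrite mxE; apply/eqP/x0/in_setT.
exists T; split => //; apply/eqP; rewrite eqEsubv subvf /=.
apply/subvP => y _; rewrite (row_sum_delta y); apply: memv_suml => j _; apply: memvZ.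
set i := enum_val j; have iT : i \in T by have := enum_valP j; rewrite !inE negbK.
have : ~~ inj (T :\ i).
  by apply/negP => /minT /(_ (subD1set T i)) /setP /(_ i); rewrite !inE eqxx iT.
(* By minimality some nonzero x in H vanishes on T :\ i; restricted to T it is
   a nonzero multiple of the unit vector at i. *)
rewrite /inj -vpick0; set x := vpick _ => x_neq0.
have /memv_capP [xH] : x \in (H :&: lker (puncture (~: (T :\ i))))%VS by apply: memv_pick.
rewrite memv_ker puncture_setC_eq0.
move=> /delete_setC_delta xTE.
have xi_neq0 : x ord0 i != 0.
  apply: contraNneq x_neq0 => xi0; rewrite -memv0 -injT memv_cap xH memv_ker.
  by rewrite /= punctureE xTE -/i xi0 scale0r.
by rewrite -[delta_mx _ _](scalerK xi_neq0) -xTE -punctureE memvZ ?memv_img.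
Qed.

End Puncture.

Arguments puncture {F n} T.

Section SesquilinearForm.
Variables (F : finFieldType) (s : F -> F).
Hypotheses (sD : {morph s : a b / a + b}) (sM : {morph s : a b / a * b})
           (sK : involutive s).

Definition form n (x y : 'rV[F]_n) : F := \sum_(i < n) x ord0 i * s (y ord0 i).

Definition dual_form n (C : {vspace 'rV[F]_n}) : {vspace 'rV[F]_n} :=
  <<enum [set y | [forall x, (x \in C) ==> (form x y == 0%R)]]>>%VS.

Definition hull n (C : {vspace 'rV[F]_n}) : {vspace 'rV[F]_n} := (C :&: dual_form C)%VS.

Lemma s0 : s 0 = 0.
Proof. by apply: (@addrI _ (s 0)); rewrite -sD !addr0. Qed.

Lemma formDl n (u v y : 'rV[F]_n) : form (u + v) y = form u y + form v y.
Proof. by rewrite /form -big_split; apply: eq_bigr => i _; rewrite mxE mulrDl. Qed.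

Lemma formZDr n (x u v : 'rV[F]_n) a : form x (a *: u + v) = s a * form x u + form x v.
Proof.
rewrite /form mulr_sumr -big_split; apply: eq_bigr => i _.
by rewrite !mxE sD sM mulrDr mulrCA.
Qed.

Lemma s_form n (x y : 'rV[F]_n) : s (form x y) = form y x.
Proof.
rewrite /form (big_morph s sD s0); apply: eq_bigr => i _.
by rewrite sM sK mulrC.
Qed.

Lemma form_eq0C n (x y : 'rV[F]_n) : form x y = 0 -> form y x = 0.
Proof. by move=> xy0; rewrite -s_form xy0 s0. Qed.

Lemma dual_formP n (C : {vspace 'rV[F]_n}) y :
  reflect (forall x, x \in C -> form x y = 0) (y \in dual_form C).
Proof.
rewrite mem_span_enum_set => [|{y}|{y} a u v /forall_inP Cu /forall_inP Cv].
- by apply: (iffP forall_inP) => Cy x xC; apply/eqP; apply: Cy.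
- apply/forall_inP => x _; rewrite /form big1 // => i _.
  by rewrite mxE s0 mulr0.
- apply/forall_inP => x xC.
  by rewrite formZDr (eqP (Cu x xC)) (eqP (Cv x xC)) mulr0 addr0.
Qed.

Lemma form_delete n (T : {set 'I_n}) (x y : 'rV[F]_n) :
  delete (~: T) x = 0 -> form (delete T x) (delete T y) = form x y.
Proof.
move=> /eqP; rewrite delete_eq0 setCK => /forall_inP xT.
rewrite /form (bigID (mem (~: T))) /= [X in _ + X]big1 ?addr0; last first.
  by move=> i; rewrite inE negbK => /xT /eqP ->; rewrite mul0r.
rewrite (big_enum_val (fun i => x ord0 i * s (y ord0 i))).
by apply: eq_bigr => j _; rewrite !mxE.
Qed.

Lemma hull_shortened_eq0 n (C : {vspace 'rV[F]_n}) (T : {set 'I_n}) :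
  (hull C :&: lker (puncture (~: T)))%VS = 0%VS ->
  (puncture (~: T) @: hull C)%VS = fullv ->
  hull (shortened C T) = 0%VS.
Proof.
move=> injT ontoT; apply/eqP; rewrite -subv0; apply/subvP => y.
case/memv_capP; rewrite {1}shortenedE => /memv_imgP [z].
rewrite memv_cap memv_ker => /andP [zC zT] -> zS.
suff zH : z \in hull C.
  have : z \in (hull C :&: lker (puncture (~: T)))%VS by rewrite memv_cap memv_ker zH.
  by rewrite injT !memv0 => /eqP ->; rewrite linear0.
rewrite memv_cap zC; apply/dual_formP => x xC.
have : puncture (~: T) x \in (puncture (~: T) @: hull C)%VS by rewrite ontoT memvf.
case/memv_imgP => h /memv_capP [hC /dual_formP hD] /eqP.
rewrite -subr_eq0 -linearB /= => xhT.
have xhS : puncture T (x - h) \in shortened C T.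
  by rewrite shortenedE memv_img // memv_cap memv_ker xhT memvB.
rewrite -(subrK h x) formDl (form_eq0C (hD z zC)) addr0.
rewrite punctureE in xhT; rewrite -(form_delete _ (eqP xhT)) -!punctureE.
exact: (dual_formP _ _ zS).
Qed.

Lemma shortened_hull_LCD n (C : {vspace 'rV[F]_n}) d :
  min_dist_ge C d ->
  exists T : {set 'I_n},
    [/\ #|T| = \dim (hull C), #|~: T| = (n - \dim (hull C))%N,
        \dim (shortened C T) = (\dim C - \dim (hull C))%N,
        hull (shortened C T) = 0%VS & min_dist_ge (shortened C T) d].
Proof.
move=> Cd; have [T [injT ontoT]] := exists_information_set (hull C).
have cardT : #|T| = \dim (hull C).
  by rewrite -(limg_dim_eq injT) ontoT dimvf dim_matrix mul1r setCK.
have ontoC : (puncture (~: T) @: C)%VS = fullv.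
  by apply/eqP; rewrite eqEsubv subvf -ontoT limgS ?capvSl.
exists T; split.
- exact: cardT.
- by rewrite -cardT; apply: (canRL (addKn _)); rewrite cardsC card_ord.
- by rewrite dim_shortened ontoC -ontoT (limg_dim_eq injT).
- exact: hull_shortened_eq0.
- exact: min_dist_ge_shortened.
Qed.

End SesquilinearForm.

Lemma expr_sqrt_card_conj (F : finFieldType) (q : nat) : #|F| = (q ^ 2)%N ->
  [/\ {morph (fun a : F => a ^+ q) : a b / a + b},
      {morph (fun a : F => a ^+ q) : a b / a * b} &
      involutive (fun a : F => a ^+ q)].
Proof.
move=> cardF; have [p p_pr pcharFp] := finPcharP F.
have qp : [pchar F].-nat q.
  have : p.-nat (q * q)%N.
    by rewrite mulnn -cardF (card_pprimeChar pcharFp) pnatX pnat_id ?orbT.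
  rewrite pnatM andbb; apply: sub_in_pnat => r _; rewrite inE => /eqP ->; exact: pcharFp.
split=> [a b | a b | a] /=; first exact: exprDn_pchar.
  exact: exprMn.
by rewrite -exprM mulnn -cardF expf_card.
Qed.

Theorem theorem3p2 :
  (forall (F : finFieldType) (n k d l : nat) (C : {vspace 'rV[F]_n}),
     \dim C = k -> is_min_dist C d -> \dim (hullE C) = l ->
     exists T : {set 'I_n},
       [/\ #|T| = l, #|~: T| = (n - l)%N, \dim (shortened C T) = (k - l)%N,
           LCD_E (shortened C T) & min_dist_ge (shortened C T) d])
  /\
  (forall (F : finFieldType) (q n k d l : nat) (C : {vspace 'rV[F]_n}),
     #|F| = (q ^ 2)%N ->
     \dim C = k -> is_min_dist C d -> \dim (hullH q C) = l ->
     exists T : {set 'I_n},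
       [/\ #|T| = l, #|~: T| = (n - l)%N, \dim (shortened C T) = (k - l)%N,
           LCD_H q (shortened C T) & min_dist_ge (shortened C T) d]).
Proof.
(* [dualE] and [dualH q] are [dual_form id] and [dual_form (fun a => a ^+ q)]
   up to conversion. *)
split=> [F n k d l C <- [_ Cd] <- | F q n k d l C cardF <- [_ Cd] <-].
  by apply: (shortened_hull_LCD (s := id)) Cd.
have [sD sM sK] := expr_sqrt_card_conj cardF.
exact: (shortened_hull_LCD sD sM sK Cd).
Qed.
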